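(* In the setting of the context, assume $\Pi^\rho_0=\{\mathbf{0}\}$ and that Condition I holds ($ZR^i\in L^1$ for all $i\in\{1,\dots,d\}$ and all $Z\in\mathcal{Q}$). If $\mathcal{Q}\cap\mathcal{M}=\emptyset$, then the market admits $\rho$-arbitrage.
   Context: Let $(\Omega,\mathcal{F},\mathbb{P})$ be a probability space and a market: riskless asset $S^0_0=1$, $S^0_1=1+r$, $r>-1$; risky assets $S^1,\dots,S^d$ with constants $S^i_0>0$ and real-valued $\mathcal{F}$-measurable $S^i_1$; returns $R^i:=(S^i_1-S^i_0)/S^i_0$. Standing assumptions: nonredundancy (if $\theta\in\mathbb{R}^{1+d}$ with $\sum_{i=0}^d\theta^iS^i_t=0$ a.s. for $t\in\{0,1\}$ then $\theta=0$), $R^i\in L^1$, $\mathbb{E}[R^i]\ne r$ for some $i$. Excess return: $X_\pi:=\pi\cdot(R-r\mathbf{1})$; $\Pi_0:=\{\pi:\mathbb{E}[X_\pi]=0\}$. $L$ is a Riesz space with $L^\infty\subset L\subset L^1$ containing all $X_\pi$. $\mathcal{D}:=\{Z\in L^1:Z\ge0,\mathbb{E}[Z]=1\}$; $\mathcal{Q}\subset\mathcal{D}$ is convex with $1\in\mathcal{Q}$ and $\rho(X)=\sup_{Z\in\mathcal{Q}}\mathbb{E}[-ZX]$ on $L$, with $\mathbb{E}[-ZX]:=\mathbb{E}[ZX^-]-\mathbb{E}[ZX^+]$ and $\mathbb{E}[-ZX]=\infty$ if $\mathbb{E}[ZX^-]=\infty$. $\Pi^\rho_0$ is the set of $\pi\in\Pi_0$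 with $\rho(X_\pi)<\infty$ and $\rho(X_\pi)\le\rho(X_{\pi'})$ for all $\pi'\in\Pi_0$. $\mathcal{M}:=\{Z\in\mathcal{D}:\mathbb{E}[Z(R^i-r)]=0\ \forall i\}$. $\pi$ is $\rho$-efficient if $\mathbb{E}[X_\pi]\ge0$ and no $\pi'$ has $\mathbb{E}[X_{\pi'}]\ge\mathbb{E}[X_\pi]$, $\rho(X_{\pi'})\le\rho(X_\pi)$ with one inequality strict; $\rho$-arbitrage means no $\rho$-efficient portfolio exists. *)

From HB Require Import structures.
From mathcomp Require Import all_boot all_order all_algebra.
From mathcomp Require Import all_classical all_reals all_analysis.
Set Implicit Arguments. Unset Strict Implicit. Unset Printing Implicit Defensive.
Import Order.TTheory GRing.Theory Num.Theory.
Local Open Scope classical_set_scope.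
Local Open Scope ring_scope.

Section Market.
Context {R : realType} {dT : measure_display} {T : measurableType dT}.
Context (P : probability T R) (d : nat).

Definition L1 : set (T -> R) :=
  [set f : T -> R | measurable_fun setT f /\ P.-integrable setT (EFin \o f)].
Definition Linf : set (T -> R) :=
  [set f : T -> R | measurable_fun setT f /\ exists M : R, {ae P, forall x, `|f x| <= M}].

(* a Riesz subspace of R^T: vector subspace closed under |.|
   (hence under pointwise max/min) *)
Definition riesz_subspace (L : set (T -> R)) : Prop :=
  [/\ L (fun _ => 0),
      (forall f g, L f -> L g -> L (fun x => f x + g x)),
      (forall (a : R) f, L f -> L (fun x => a * f x)) &
      (forall f, L f -> L (fun x => `|f x|))].

Definition Ex (f : T -> R) : \bar R := (\int[P]_x (f x)%:E)%E.

Definition ret (S0 : 'I_d -> R) (S1 : 'I_d -> T -> R) (i : 'I_d) : T -> R :=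
  fun x => (S1 i x - S0 i) / S0 i.

Definition Xpi (r : R) (S0 : 'I_d -> R) (S1 : 'I_d -> T -> R)
    (pi : 'I_d -> R) : T -> R :=
  fun x => \sum_(i < d) pi i * (ret S0 S1 i x - r).

Definition market_assumptions (r : R) (S0 : 'I_d -> R)
    (S1 : 'I_d -> T -> R) : Prop :=
  [/\ -1 < r,
      (forall i, 0 < S0 i) /\ (forall i, measurable_fun setT (S1 i)),
      (* nonredundancy *)
      (forall (th0 : R) (th : 'I_d -> R),
          th0 * 1 + \sum_(i < d) th i * S0 i = 0 ->
          {ae P, forall x, th0 * (1 + r) + \sum_(i < d) th i * S1 i x = 0} ->
          th0 = 0 /\ forall i, th i = 0),
      (forall i, L1 (ret S0 S1 i)) &
      (exists i, Ex (ret S0 S1 i) <> r%:E)].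

Definition Dset : set (T -> R) :=
  [set Z | L1 Z /\ {ae P, forall x, 0 <= Z x} /\ Ex Z = 1%E].

Definition convex_set_fun (Q : set (T -> R)) : Prop :=
  forall Z1 Z2 (l : R), Q Z1 -> Q Z2 -> 0 <= l -> l <= 1 ->
    Q (fun x => l * Z1 x + (1 - l) * Z2 x).

Definition Eneg (Z X : T -> R) : \bar R :=
  let a := (\int[P]_x (Z x * Num.max (- X x) 0)%:E)%E in
  let b := (\int[P]_x (Z x * Num.max (X x) 0)%:E)%E in
  if a == +oo%E then +oo%E else (a - b)%E.

Definition rho (Q : set (T -> R)) (X : T -> R) : \bar R :=
  ereal_sup [set Eneg Z X | Z in Q].

Definition Pi0 r S0 S1 : set ('I_d -> R) :=
  [set pi | Ex (Xpi r S0 S1 pi) = 0%E].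

Definition Pi0_rho Q r S0 S1 : set ('I_d -> R) :=
  [set pi | Pi0 r S0 S1 pi /\ (rho Q (Xpi r S0 S1 pi) < +oo)%E /\
     forall pi', Pi0 r S0 S1 pi' ->
       (rho Q (Xpi r S0 S1 pi) <= rho Q (Xpi r S0 S1 pi'))%E].

Definition Mset r S0 S1 : set (T -> R) :=
  [set Z | Dset Z /\ forall i,
     L1 (fun x => Z x * (ret S0 S1 i x - r)) /\
     Ex (fun x => Z x * (ret S0 S1 i x - r)) = 0%E].

Definition condition_I Q S0 S1 : Prop :=
  forall Z i, Q Z -> L1 (fun x => Z x * ret S0 S1 i x).

Definition rho_efficient Q r S0 S1 (pi : 'I_d -> R) : Prop :=
  (0 <= Ex (Xpi r S0 S1 pi))%E /\
  ~ exists pi',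
      (Ex (Xpi r S0 S1 pi) <= Ex (Xpi r S0 S1 pi'))%E /\
      (rho Q (Xpi r S0 S1 pi') <= rho Q (Xpi r S0 S1 pi))%E /\
      ((Ex (Xpi r S0 S1 pi) < Ex (Xpi r S0 S1 pi'))%E \/
       (rho Q (Xpi r S0 S1 pi') < rho Q (Xpi r S0 S1 pi))%E).

Definition rho_arbitrage Q r S0 S1 : Prop :=
  ~ exists pi, rho_efficient Q r S0 S1 pi.

End Market.

From HB Require Import structures.
From mathcomp Require Import all_boot all_order all_algebra.
From mathcomp Require Import all_classical all_reals all_analysis.
From mathcomp Require Import measurable_realfun lra ring.
Import Order.TTheory GRing.Theory Num.Theory.

(* If no Z in Q is a martingale density, the vectors
   t (E[Z (R^i - r)])_i with t > 0 and Z in Q form a convex cone in R^d that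
   avoids 0.  A (non-strictly) separating functional pi <> 0 then satisfies
   E[Z X_pi] >= 0 for every Z in Q, i.e. rho(X_pi) <= 0.  Since pi is not in
   Pi^rho_0 = {0}, this forces E[X_pi] > 0; adding pi to any portfolio raises
   its mean without raising its risk, so no portfolio is rho-efficient. *)

Set Implicit Arguments. Unset Strict Implicit. Unset Printing Implicit Defensive.
Local Open Scope classical_set_scope.
Local Open Scope ring_scope.

Section ConeSeparation.
Variable R : realType.

Definition conic (I : Type) (K : set (I -> R)) : Prop :=
  (forall x y, K x -> K y -> K (fun i => x i + y i)) /\
  (forall (t : R) x, 0 < t -> K x -> K (fun i => t * x i)).

Definition dotn (n : nat) (f x : nat -> R) : R := \sum_(i < n) f i * x i.

Lemma dotnS n f x : dotn n.+1 f x = dotn n f x + f n * x n.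
Proof. by rewrite /dotn big_ord_recr. Qed.

Lemma dotn_set n f a x :
  dotn n (fun i => if i == n then a else f i) x = dotn n f x.
Proof. by apply: eq_bigr => i _; rewrite ltn_eqF. Qed.

Lemma dotn0 n x : dotn n (fun _ => 0) x = 0.
Proof. by rewrite /dotn big1 // => i _; rewrite mul0r. Qed.

Lemma dotn_lincomb n f x y (a b : R) :
  dotn n f (fun i => a * x i + b * y i) = a * dotn n f x + b * dotn n f y.
Proof.
by rewrite /dotn !mulr_sumr -big_split /=; apply: eq_bigr => i _; ring.
Qed.

Lemma conic_cancel_coord n (K : set (nat -> R)) k k' : conic K ->
    K k -> 0 < k n -> K k' -> k' n < 0 ->
  let w i := (k n)^-1 * k i + (- k' n)^-1 * k' i in K w /\ w n = 0.
Proof.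
move=> [Kadd Kscale] Kk kn Kk' k'n; split.
  by apply: Kadd; apply: Kscale; rewrite // invr_gt0 ?oppr_gt0.
by rewrite mulVf ?gt_eqF // invrN mulNr mulVf ?lt_eqF // subrr.
Qed.

(* One-dimensional Hahn-Banach step: by [conic_cancel_coord], every
   -g.k / k_n with k_n > 0 lies below every g.k' / (-k'_n) with k'_n < 0,
   and any [a] in between works. *)
Lemma conic_extension n (K : set (nat -> R)) g u v : conic K ->
    (forall x, K x -> x n = 0 -> 0 <= dotn n g x) ->
    K u -> 0 < u n -> K v -> v n < 0 ->
  exists a, forall x, K x -> 0 <= dotn n g x + a * x n.
Proof.
move=> Kc g0 Ku un Kv vn.
have bound k k' : K k -> 0 < k n -> K k' -> k' n < 0 ->
    - dotn n g k / k n <= dotn n g k' / - k' n.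
  move=> Kk kn Kk' k'n; have [Kw wn] := conic_cancel_coord Kc Kk kn Kk' k'n.
  by have := g0 _ Kw wn; rewrite dotn_lincomb; lra.
pose A := [set - dotn n g k / k n | k in [set k | K k /\ 0 < k n]].
have A0 : A !=set0 by exists (- dotn n g u / u n), u.
have supA : has_sup A.
  by split=> //; exists (dotn n g v / - v n) => _ [k [Kk kn] <-]; exact: bound.
exists (sup A) => x Kx; have [xn|xn|xn] := ltgtP (x n) 0.
- have : sup A <= dotn n g x / - x n.
    by apply: ge_sup => // _ [k [Kk kn] <-]; exact: bound.
  rewrite ler_pdivlMr ?oppr_gt0 //; nra.
- have : - dotn n g x / x n <= sup A by apply: sup_upper_bound => //; exists x.
  rewrite ler_pdivrMr //; nra.
- by rewrite xn mulr0 addr0; exact: g0.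
Qed.

(* Non-strict separation needs no closedness of K: separate the slice
   x_n = 0 by induction and extend with [conic_extension]. *)
Lemma conic_separation_nat n (K : set (nat -> R)) : conic K ->
    (forall x, K x -> exists2 i, (i < n)%N & x i != 0) -> K !=set0 ->
  exists f, (exists2 i, (i < n)%N & f i != 0) /\
            forall x, K x -> 0 <= dotn n f x.
Proof.
elim: n K => [|n IH] K Kc K0 [x0 Kx0]; first by case: (K0 x0 Kx0).
pose e (a : R) i := if i == n then a else 0.
have dotn_e a x : dotn n.+1 (e a) x = a * x n.
  by rewrite dotnS dotn_set dotn0 add0r /e eqxx.
have e_neq0 a : a != 0 -> exists2 i, (i < n.+1)%N & e a i != 0.
  by exists n; rewrite // /e eqxx.
have [[v [Kv vn]]|Kge0] := pselect (exists v, K v /\ v n < 0); last first.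
  exists (e 1); split=> [|x Kx]; first exact/e_neq0/oner_neq0.
  by rewrite dotn_e mul1r leNgt; apply/negP => xn; apply: Kge0; exists x.
have [[u [Ku un]]|Kle0] := pselect (exists u, K u /\ 0 < u n); last first.
  exists (e (-1)); split=> [|x Kx]; first by apply/e_neq0; rewrite oppr_eq0.
  rewrite dotn_e mulN1r oppr_ge0 leNgt.
  by apply/negP => xn; apply: Kle0; exists x.
have [g [[i ilt gi] g0]] : exists g, (exists2 i, (i < n)%N & g i != 0) /\
    forall x, K x /\ x n = 0 -> 0 <= dotn n g x.
  apply: IH.
  - case: Kc => Kadd Kscale; split.
      by move=> x y [Kx xn] [Ky yn]; rewrite xn yn addr0; split; first exact: Kadd.
    by move=> t x t0 [Kx xn]; rewrite xn mulr0; split; first exact: Kscale.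
  - move=> x [Kx xn]; have [i] := K0 x Kx; rewrite ltnS leq_eqVlt.
    by case/orP => [/eqP ->|ilt xi]; [rewrite xn eqxx | exists i].
  - by eexists; apply: conic_cancel_coord Kc Ku un Kv vn.
have [a ga] := conic_extension Kc (fun x Kx xn => g0 x (conj Kx xn)) Ku un Kv vn.
exists (fun j => if j == n then a else g j); split.
  by exists i; rewrite ?ltn_eqF // ltnW.
by move=> x Kx; rewrite dotnS dotn_set eqxx; exact: ga.
Qed.

Lemma conic_separation n (K : set ('I_n -> R)) : conic K ->
    (forall x, K x -> exists i, x i != 0) -> K !=set0 ->
  exists f : 'I_n -> R, (exists i, f i != 0) /\
            forall x, K x -> 0 <= \sum_(i < n) f i * x i.
Proof.
move=> [Kadd Kscale] K0 [x0 Kx0].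
pose K' := [set y : nat -> R | exists2 x, K x & forall i : 'I_n, y i = x i].
have K'c : conic K'.
  split=> [y1 y2 [x1 Kx1 e1] [x2 Kx2 e2]|t y t0 [x Kx e]].
    by exists (fun i => x1 i + x2 i) => [|i]; [exact: Kadd | rewrite e1 e2].
  by exists (fun i => t * x i) => [|i]; [exact: Kscale | rewrite e].
have K'0 y : K' y -> exists2 i, (i < n)%N & y i != 0.
  by move=> [x Kx e]; have [i xi] := K0 x Kx; exists i; rewrite ?e.
have K'x0 : K' !=set0.
  by exists (fun j => oapp x0 0 (insub j)), x0 => // i; rewrite valK.
have [f [[i ilt fi] f0]] := conic_separation_nat K'c K'0 K'x0.
exists (fun i : 'I_n => f i); split; first by exists (Ordinal ilt).
move=> x Kx; have := f0 (fun j => oapp x 0 (insub j)) _.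
rewrite /dotn; under eq_bigr do rewrite valK.
by apply; exists x => // j; rewrite valK.
Qed.

End ConeSeparation.

Section Expectation.
Context {R : realType} {dT : measure_display} {T : measurableType dT}.
Variable P : probability T R.

Definition mean (f : T -> R) : R := fine (Ex P f).

Lemma ExE f : P.-integrable setT (EFin \o f) -> Ex P f = (mean f)%:E.
Proof. by move=> /(integrable_fin_num measurableT) fin; rewrite /mean fineK. Qed.

Lemma integrable_lincomb (I : Type) (s : seq I) (c : I -> R) (h : I -> T -> R) :
    (forall i, P.-integrable setT (EFin \o h i)) ->
  P.-integrable setT (EFin \o (fun x => \sum_(i <- s) c i * h i x)).
Proof.
move=> hi; under [X in _.-integrable _ X]eq_fun do rewrite /= -sumEFin.
under eq_fun do under eq_bigr do rewrite EFinM.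
by apply: integrable_sum => // i _; apply: integrableZl => //; exact: hi.
Qed.

Lemma mean_lincomb (I : Type) (s : seq I) (c : I -> R) (h : I -> T -> R) :
    (forall i, P.-integrable setT (EFin \o h i)) ->
  mean (fun x => \sum_(i <- s) c i * h i x) = \sum_(i <- s) c i * mean (h i).
Proof.
move=> hi; have Eh i : (\int[P]_x (h i x)%:E)%E = (mean (h i))%:E := ExE (hi i).
rewrite /mean /Ex.
under eq_integral do rewrite -sumEFin.
under eq_integral do under eq_bigr do rewrite EFinM.
rewrite integral_sum //; last by move=> i; apply: integrableZl => //; exact: hi.
under eq_bigr do rewrite (integralZl measurableT (hi _)) Eh -EFinM.
by rewrite sumEFin.
Qed.

Lemma integrable_lincomb2 (a b : R) f g :
    P.-integrable setT (EFin \o f) -> P.-integrable setT (EFin \o g) ->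
  P.-integrable setT (EFin \o (fun x => a * f x + b * g x)).
Proof.
move=> hf hg; have -> : EFin \o (fun x => a * f x + b * g x) =
    ((fun x => a%:E * (f x)%:E) \+ (fun x => b%:E * (g x)%:E))%E.
  by apply/funext => x; rewrite /= EFinD !EFinM.
by apply: integrableD => //; apply: integrableZl.
Qed.

Lemma mean_lincomb2 (a b : R) f g :
    P.-integrable setT (EFin \o f) -> P.-integrable setT (EFin \o g) ->
  mean (fun x => a * f x + b * g x) = a * mean f + b * mean g.
Proof.
move=> hf hg; rewrite {1}/mean /Ex.
under eq_integral do rewrite EFinD !EFinM.
rewrite integralD //; try by apply: integrableZl.
by rewrite !integralZl // -!/(Ex P _) !ExE.
Qed.

Lemma funrneg_le_norm (X : T -> R) x : `|X^\- x| <= `|X x|.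
Proof.
by rewrite ger0_norm ?funrneg_ge0 // ge_max normr_ge0 andbT -normrN ler_norm.
Qed.

Lemma funrpos_le_norm (X : T -> R) x : `|X^\+ x| <= `|X x|.
Proof.
by rewrite ger0_norm ?funrpos_ge0 // ge_max normr_ge0 andbT ler_norm.
Qed.

Lemma Eneg_integrable (Z X : T -> R) :
    measurable_fun setT Z -> measurable_fun setT X ->
    P.-integrable setT (EFin \o (fun x => Z x * X x)) ->
  Eneg P Z X = (- mean (fun x => Z x * X x))%:E.
Proof.
move=> mZ mX hZX.
have dominated (Y : T -> R) :
    measurable_fun setT Y -> (forall x, `|Y x| <= `|X x|) ->
    P.-integrable setT (EFin \o (fun x => Z x * Y x)).
  move=> mY YX; apply: le_integrable hZX => //.
    by apply/measurable_EFinP; exact: measurable_funM.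
  by move=> x _; rewrite lee_fin /= !normrM ler_wpM2l.
have hpos := dominated _ (measurable_funrpos mX) (funrpos_le_norm X).
have hneg := dominated _ (measurable_funrneg mX) (funrneg_le_norm X).
have XE : (fun x => Z x * X x) =
    (fun x => 1 * (Z x * X^\+ x) + (-1) * (Z x * X^\- x)).
  apply/funext => x; have /(congr1 (fun f => f x)) := funrposBneg X.
  by rewrite !fctE => <-; ring.
have Eneg_part : (\int[P]_x (Z x * Num.max (- X x) 0)%:E)%E =
  (mean (fun x => Z x * X^\- x))%:E := ExE hneg.
have Epos_part : (\int[P]_x (Z x * Num.max (X x) 0)%:E)%E =
  (mean (fun x => Z x * X^\+ x))%:E := ExE hpos.
rewrite /Eneg /= Eneg_part Epos_part /= XE mean_lincomb2 //.
by rewrite -EFinB; congr (_%:E); ring.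
Qed.

End Expectation.

Section ExcessMoments.
Context {R : realType} {dT : measure_display} {T : measurableType dT}.
Variables (P : probability T R) (d : nat) (r : R).
Variables (S0 : 'I_d -> R) (S1 : 'I_d -> T -> R) (Q : set (T -> R)).
Hypothesis QD : Q `<=` Dset P.
Hypothesis QI : condition_I P Q S0 S1.

Definition excess_moment (i : 'I_d) (Z : T -> R) : R :=
  mean P (fun x => Z x * (ret S0 S1 i x - r)).

Definition Xpi_moment (pi : 'I_d -> R) (Z : T -> R) : R :=
  \sum_(i < d) pi i * excess_moment i Z.

Lemma integrable_excess Z i : Q Z ->
  P.-integrable setT (EFin \o (fun x => Z x * (ret S0 S1 i x - r))).
Proof.
move=> QZ; have := integrable_lincomb2 1 (- r) (QI i QZ).2 (QD QZ).1.2.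
by congr (_.-integrable _ (EFin \o _)); apply/funext => x; ring.
Qed.

Lemma ZXpiE pi (Z : T -> R) : (fun x => Z x * Xpi r S0 S1 pi x) =
  fun x => \sum_(i < d) pi i * (Z x * (ret S0 S1 i x - r)).
Proof.
by apply/funext => x; rewrite /Xpi mulr_sumr; apply: eq_bigr => i _; ring.
Qed.

Lemma integrable_ZXpi pi Z : Q Z ->
  P.-integrable setT (EFin \o (fun x => Z x * Xpi r S0 S1 pi x)).
Proof.
move=> QZ; rewrite ZXpiE; apply: integrable_lincomb => i.
exact: integrable_excess.
Qed.

Lemma mean_ZXpi pi Z : Q Z ->
  mean P (fun x => Z x * Xpi r S0 S1 pi x) = Xpi_moment pi Z.
Proof.
by move=> QZ; rewrite ZXpiE mean_lincomb // => i; exact: integrable_excess.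
Qed.

Lemma Xpi_momentD pi pi' Z :
  Xpi_moment (fun i => pi i + pi' i) Z = Xpi_moment pi Z + Xpi_moment pi' Z.
Proof.
by rewrite /Xpi_moment -big_split; apply: eq_bigr => i _; rewrite mulrDl.
Qed.

Lemma excess_moment_lincomb (a b : R) Z Z' i : Q Z -> Q Z' ->
  excess_moment i (fun x => a * Z x + b * Z' x) =
  a * excess_moment i Z + b * excess_moment i Z'.
Proof.
move=> QZ QZ'; rewrite /excess_moment -mean_lincomb2; try exact: integrable_excess.
by congr (mean P _); apply/funext => x; ring.
Qed.

Hypothesis Q1 : Q (fun _ => 1).

Lemma Ex_Xpi pi : Ex P (Xpi r S0 S1 pi) = (Xpi_moment pi (fun _ => 1))%:E.
Proof.
rewrite -mean_ZXpi // -ExE; last exact: integrable_ZXpi.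
by congr (Ex P _); apply/funext => x; rewrite mul1r.
Qed.

Hypothesis measurable_Xpi : forall pi, measurable_fun setT (Xpi r S0 S1 pi).

Lemma Eneg_Xpi pi Z : Q Z ->
  Eneg P Z (Xpi r S0 S1 pi) = (- Xpi_moment pi Z)%:E.
Proof.
move=> QZ; rewrite Eneg_integrable ?mean_ZXpi //; last exact: integrable_ZXpi.
exact: (QD QZ).1.1.
Qed.

Lemma rho_Xpi_le pi (c : \bar R) :
    (forall Z, Q Z -> ((- Xpi_moment pi Z)%:E <= c)%E) ->
  (rho P Q (Xpi r S0 S1 pi) <= c)%E.
Proof. by move=> Zc; apply: ge_ereal_sup => _ [Z QZ <-]; rewrite Eneg_Xpi // Zc. Qed.

Lemma rho_Xpi_ge pi Z : Q Z ->
  ((- Xpi_moment pi Z)%:E <= rho P Q (Xpi r S0 S1 pi))%E.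
Proof. by move=> QZ; apply: ereal_sup_ubound; exists Z => //; exact: Eneg_Xpi. Qed.

Lemma Pi0_rho_of_nonneg_Xpi_moment pi :
    Xpi_moment pi (fun _ => 1) = 0 -> (forall Z, Q Z -> 0 <= Xpi_moment pi Z) ->
  Pi0_rho P Q r S0 S1 pi.
Proof.
move=> pi1 pi_ge0; have rho_le0 : (rho P Q (Xpi r S0 S1 pi) <= 0)%E.
  by apply: rho_Xpi_le => Z QZ; rewrite lee_fin oppr_le0 pi_ge0.
split; first by rewrite /Pi0 /= Ex_Xpi pi1.
split; first exact: le_lt_trans rho_le0 (ltey _).
move=> pi'; rewrite /Pi0 /= Ex_Xpi => -[pi'1].
by apply: le_trans rho_le0 _; have := rho_Xpi_ge pi' Q1; rewrite pi'1 oppr0.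
Qed.

Lemma rho_arbitrage_of_nonneg_Xpi_moment pi :
    0 < Xpi_moment pi (fun _ => 1) -> (forall Z, Q Z -> 0 <= Xpi_moment pi Z) ->
  rho_arbitrage P Q r S0 S1.
Proof.
move=> pi1 pi_ge0 [pi0 [_ pi0_eff]]; apply: pi0_eff.
exists (fun i => pi0 i + pi i); rewrite !Ex_Xpi Xpi_momentD !lee_fin !lte_fin.
split; first by rewrite lerDl ltW.
split; last by left; rewrite ltrDl.
apply: rho_Xpi_le => Z QZ; apply: le_trans (rho_Xpi_ge pi0 QZ).
by rewrite Xpi_momentD lee_fin lerN2 lerDl pi_ge0.
Qed.

Definition excess_cone : set ('I_d -> R) :=
  [set x | exists t Z, [/\ 0 < t, Q Z & forall i, x i = t * excess_moment i Z]].

Hypothesis Qconv : convex_set_fun Q.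

Lemma conic_excess_cone : conic excess_cone.
Proof.
split=> [x y [t [Z [t0 QZ xE]]] [t' [Z' [t'0 QZ' yE]]] |
         s x s0 [t [Z [t0 QZ xE]]]].
  have tt'0 : 0 < t + t' by exact: addr_gt0.
  exists (t + t'), (fun x => t / (t + t') * Z x + (1 - t / (t + t')) * Z' x).
  split=> //; first apply: Qconv => //.
  - by rewrite divr_ge0 ?ltW.
  - by rewrite ler_pdivrMr // mul1r lerDl ltW.
  move=> i; rewrite xE yE excess_moment_lincomb //; field; exact: lt0r_neq0.
exists (s * t), Z; split=> // [|i]; first exact: mulr_gt0.
by rewrite xE mulrA.
Qed.

Hypothesis QM : Q `&` Mset P r S0 S1 = set0.

Lemma excess_cone_neq0 x : excess_cone x -> exists i, x i != 0.
Proof.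
move=> [t [Z [t0 QZ xE]]]; apply: contrapT => x0.
suff : (Q `&` Mset P r S0 S1) Z by rewrite QM.
split=> //; split; first exact: QD.
move=> i; have : x i == 0 by apply: contrapT => /negP xi; apply: x0; exists i.
rewrite xE mulf_eq0 gt_eqF //= => /eqP m0.
have hi := integrable_excess i QZ.
split; last by rewrite ExE // -/(excess_moment i Z) m0.
by split=> //; apply/measurable_EFinP; exact: measurable_int hi.
Qed.

Lemma exists_nonneg_Xpi_moment :
  exists pi, (exists i, pi i != 0) /\ forall Z, Q Z -> 0 <= Xpi_moment pi Z.
Proof.
have cone1 : excess_cone (fun i => excess_moment i (fun _ => 1)).
  by exists 1, (fun _ => 1); split=> // i; rewrite mul1r.
have [pi [pi_neq0 pi_ge0]] :=
  conic_separation conic_excess_cone excess_cone_neq0 (ex_intro _ _ cone1).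
exists pi; split=> // Z QZ; apply: pi_ge0.
by exists 1, Z; split=> // i; rewrite mul1r.
Qed.

End ExcessMoments.

Theorem proposition4p19 (R : realType) (dT : measure_display)
  (T : measurableType dT) (P : probability T R) (d : nat)
  (r : R) (S0 : 'I_d -> R) (S1 : 'I_d -> T -> R)
  (L Q : set (T -> R)) :
  market_assumptions P r S0 S1 ->
  riesz_subspace L -> Linf P `<=` L -> L `<=` L1 P ->
  (forall pi, L (Xpi r S0 S1 pi)) ->
  Q `<=` Dset P -> convex_set_fun Q -> Q (fun _ => 1) ->
  Pi0_rho P Q r S0 S1 = [set (fun _ => 0)] ->
  condition_I P Q S0 S1 ->
  Q `&` Mset P r S0 S1 = set0 ->
  rho_arbitrage P Q r S0 S1.
Proof.
move=> _ _ _ LL1 XL QD Qconv Q1 Pi0_rho0 QI QM.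
have measurable_Xpi pi : measurable_fun setT (Xpi r S0 S1 pi) := (LL1 _ (XL pi)).1.
have [pi [[i pi_i] pi_ge0]] := exists_nonneg_Xpi_moment QD QI Q1 Qconv QM.
apply: (rho_arbitrage_of_nonneg_Xpi_moment QD QI Q1 measurable_Xpi _ pi_ge0).
rewrite lt_def pi_ge0 // andbT; apply: contraNneq pi_i => pi1.
have := Pi0_rho_of_nonneg_Xpi_moment QD QI Q1 measurable_Xpi pi1 pi_ge0.
by rewrite Pi0_rho0 => ->.
Qed.
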